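(* Let $\kappa>0$, $\nu\in\mathbb R$, and on $\mathbb H$ (the logarithmic chart) let $\delta(z)=4\cot\frac z2-2\nu$ and $\sigma(z)=-2\sqrt\kappa$ (the radial SLE with drift; in the half-plane chart, via $z\mapsto\tan\frac z2$, these are $\delta=2(\frac1z+z)-\nu(1+z^2)$, $\sigma=-\sqrt\kappa(1+z^2)$). Let $$\Gamma_{tw}(z,w)=-\frac12\log\frac{\tan\frac{z-w}4\,\tan\frac{\bar z-\bar w}4}{\tan\frac{\bar z-w}4\,\tan\frac{z-\bar w}4},\qquad z,w\in\mathbb H.$$ Suppose there exist $\mu,\mu^*\in\mathbb C$ and a real-valued $C^2$ function $\eta$ on $\mathbb H$ (the logarithmic-chart representative of a real pre-pre-Schwarzian of order $(\mu,\mu^* )$) such that, for all $z\ne w$ in $\mathbb H$, $$\mathcal{L}_\delta\eta+\tfrac12\mathcal{L}_\sigma^2\eta=0,\qquad \mathcal{L}_\delta\Gamma_{tw}(z,w)+\mathcal{L}_\sigma\eta(z)\,\mathcal{L}_\sigma\eta(w)=0,\qquad \mathcal{L}_\sigma\Gamma_{tw}(z,w)=0.$$ Then $\kappa=4$ and $\nu=0$.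
   Context: The logarithmic chart is related to the unit-disk chart by $z\mapsto e^{iz}$ and to the half-plane chart by $z\mapsto\tan\frac z2$; it is multivalued, and $\Gamma_{tw}$ is $4\pi$-periodic and $2\pi$-antiperiodic in each variable (a Green's function on the double cover of the disk punctured at the radial fixed point). Lie derivatives: $\mathcal{L}_v\eta=v\partial_z\eta+\bar v\partial_{\bar z}\eta+\mu v'+\mu^*\overline{v'}$; for a scalar $\rho$, $\mathcal L_v\rho=v\partial_z\rho+\bar v\partial_{\bar z}\rho$; $\mathcal L^2_\sigma\eta=\mathcal L_\sigma(\mathcal L_\sigma\eta)$ with $\mathcal L_\sigma\eta$ treated as a scalar; $\mathcal{L}_v\Gamma(z,w)=v(z)\partial_z\Gamma+\overline{v(z)}\partial_{\bar z}\Gamma+v(w)\partial_w\Gamma+\overline{v(w)}\partial_{\bar w}\Gamma$. *)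

From Stdlib Require Import Reals ClassicalEpsilon.
Open Scope R_scope.

Definition Cx := (R * R)%type.
Definition RtoC (r : R) : Cx := (r, 0).
Definition Ci : Cx := (0, 1).
Definition Cadd (a b : Cx) : Cx := (fst a + fst b, snd a + snd b).
Definition Copp (a : Cx) : Cx := (- fst a, - snd a).
Definition Csub (a b : Cx) : Cx := Cadd a (Copp b).
Definition Cmul (a b : Cx) : Cx :=
  (fst a * fst b - snd a * snd b, fst a * snd b + snd a * fst b).
Definition Cconj (a : Cx) : Cx := (fst a, - snd a).
Definition Cnorm2 (a : Cx) : R := fst a ^ 2 + snd a ^ 2.
Definition Cinv (a : Cx) : Cx := (fst a / Cnorm2 a, - snd a / Cnorm2 a).
Definition Cdiv (a b : Cx) : Cx := Cmul a (Cinv b).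
Definition Cmod (a : Cx) : R := sqrt (Cnorm2 a).
Definition Cexp (a : Cx) : Cx := (exp (fst a) * cos (snd a), exp (fst a) * sin (snd a)).
Definition Csin (z : Cx) : Cx :=
  Cdiv (Csub (Cexp (Cmul Ci z)) (Cexp (Copp (Cmul Ci z)))) (Cmul (RtoC 2) Ci).
Definition Ccos (z : Cx) : Cx :=
  Cdiv (Cadd (Cexp (Cmul Ci z)) (Cexp (Copp (Cmul Ci z)))) (RtoC 2).
Definition Ctan (z : Cx) : Cx := Cdiv (Csin z) (Ccos z).
Definition Ccot (z : Cx) : Cx := Cdiv (Ccos z) (Csin z).

Definition inH (z : Cx) : Prop := 0 < snd z.

Definition px (f : R -> R -> R) (x y : R) : R :=
  epsilon (inhabits 0) (fun l => derivable_pt_lim (fun t => f t y) x l).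
Definition py (f : R -> R -> R) (x y : R) : R :=
  epsilon (inhabits 0) (fun l => derivable_pt_lim (fun t => f x t) y l).
Definition has_px (f : R -> R -> R) (x y : R) : Prop :=
  exists l, derivable_pt_lim (fun t => f t y) x l.
Definition has_py (f : R -> R -> R) (x y : R) : Prop :=
  exists l, derivable_pt_lim (fun t => f x t) y l.
Definition cont2_at (f : R -> R -> R) (x y : R) : Prop :=
  forall eps, 0 < eps -> exists d, 0 < d /\
    forall x' y', Rabs (x' - x) < d -> Rabs (y' - y) < d ->
      Rabs (f x' y' - f x y) < eps.

Definition C2_on_H (eta : Cx -> R) : Prop :=
  let f := fun x y => eta (x, y) in
  forall x y, 0 < y ->
    has_px f x y /\ has_py f x y /\
    has_px (px f) x y /\ has_py (px f) x y /\
    has_px (py f) x y /\ has_py (py f) x y /\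
    cont2_at f x y /\ cont2_at (px f) x y /\ cont2_at (py f) x y /\
    cont2_at (px (px f)) x y /\ cont2_at (py (px f)) x y /\
    cont2_at (px (py f)) x y /\ cont2_at (py (py f)) x y.

Definition dxC (F : Cx -> Cx) (z : Cx) : Cx :=
  (px (fun x y => fst (F (x, y))) (fst z) (snd z),
   px (fun x y => snd (F (x, y))) (fst z) (snd z)).
Definition dyC (F : Cx -> Cx) (z : Cx) : Cx :=
  (py (fun x y => fst (F (x, y))) (fst z) (snd z),
   py (fun x y => snd (F (x, y))) (fst z) (snd z)).
Definition dz (F : Cx -> Cx) (z : Cx) : Cx :=
  Cmul (RtoC (/2)) (Csub (dxC F z) (Cmul Ci (dyC F z))).
Definition dzb (F : Cx -> Cx) (z : Cx) : Cx :=
  Cmul (RtoC (/2)) (Cadd (dxC F z) (Cmul Ci (dyC F z))).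

Definition Lsc (v rho : Cx -> Cx) (z : Cx) : Cx :=
  Cadd (Cmul (v z) (dz rho z)) (Cmul (Cconj (v z)) (dzb rho z)).
Definition Lpps (mu mus : Cx) (v : Cx -> Cx) (eta : Cx -> R) (z : Cx) : Cx :=
  Cadd (Lsc v (fun u => RtoC (eta u)) z)
       (Cadd (Cmul mu (dz v z)) (Cmul mus (Cconj (dz v z)))).
(* L_v^2 eta = L_v (L_v eta), the inner one treated as a scalar *)
Definition Lpps2 (mu mus : Cx) (v : Cx -> Cx) (eta : Cx -> R) (z : Cx) : Cx :=
  Lsc v (Lpps mu mus v eta) z.
Definition LGam (v : Cx -> Cx) (G : Cx -> Cx -> R) (z w : Cx) : Cx :=
  Cadd (Lsc v (fun u => RtoC (G u w)) z) (Lsc v (fun u => RtoC (G z u)) w).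

Definition deltaR (nu : R) (z : Cx) : Cx :=
  Csub (Cmul (RtoC 4) (Ccot (Cdiv z (RtoC 2)))) (RtoC (2 * nu)).
Definition sigmaR (kappa : R) (z : Cx) : Cx := RtoC (-2 * sqrt kappa).

(* The argument of log is a positive real number (a quotient of squared moduli),
   so log is taken as ln of its modulus. *)
Definition Gamma_tw (z w : Cx) : R :=
  let q4 := fun a => Ctan (Cdiv a (RtoC 4)) in
  - / 2 * ln (Cmod (Cdiv (Cmul (q4 (Csub z w)) (q4 (Csub (Cconj z) (Cconj w))))
                         (Cmul (q4 (Csub (Cconj z) w)) (q4 (Csub z (Cconj w)))))).

(* The second equation, taken at the fixed point w0 = 2 i ln 3, determines the
   first partial derivative: d_x eta = k F on the half-plane, where F is the real
   part of L_delta Gamma(., w0) (the drift nu cancels in it) and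
   k = -1 / (4 kappa d_x eta(w0)) is nonzero because F does not vanish identically.
   The real part of the first equation then expresses d_y eta through F, d_x F and
   the derivatives of cot (z / 2).  Equality of the mixed partials of the
   C^2 function eta yields, at every point with sin x = 0, a linear relation
   between kappa k, nu k, k and Im (mu* - mu).  At (0, 2 ln 2), (pi, 2 ln 2) and
   (pi, 2 ln 4) all the quantities involved are rational, and the three
   relations force kappa = 4 and nu = 0. *)

From Coquelicot Require Import Coquelicot.
From Stdlib Require Import Reals ClassicalEpsilon Lra FunctionalExtensionality.
Open Scope R_scope.

(** * Hyperbolic and complex functions in real coordinates *)

Lemma exp_mul_exp_opp t : exp t * exp (- t) = 1.
Proof. rewrite <- exp_plus, Rplus_opp_r. apply exp_0. Qed.

Lemma cosh_sq_sub_sinh_sq t : cosh t ^ 2 - sinh t ^ 2 = 1.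
Proof. unfold cosh, sinh. pose proof (exp_mul_exp_opp t). nra. Qed.

Lemma cosh_double t : cosh (2 * t) = 1 + 2 * sinh t ^ 2.
Proof.
  unfold cosh, sinh. replace (2 * t) with (t + t) by ring.
  replace (- (t + t)) with (- t + - t) by ring. rewrite !exp_plus.
  pose proof (exp_mul_exp_opp t). nra.
Qed.

Lemma sinh_double t : sinh (2 * t) = 2 * sinh t * cosh t.
Proof.
  unfold cosh, sinh. replace (2 * t) with (t + t) by ring.
  replace (- (t + t)) with (- t + - t) by ring. rewrite !exp_plus. field.
Qed.

Lemma sinh_neq_0 t : t <> 0 -> sinh t <> 0.
Proof.
  intros Ht E. rewrite <- sinh_0 in E.
  destruct (Rtotal_order t 0) as [H | [H | H]]; [| contradiction |].
  - pose proof (sinh_lt t 0 H). lra.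
  - pose proof (sinh_lt 0 t H). lra.
Qed.

Lemma cosh_gt_1 t : t <> 0 -> 1 < cosh t.
Proof.
  intro Ht. replace t with (2 * (t / 2)) by field. rewrite cosh_double.
  assert (sinh (t / 2) <> 0) by (apply sinh_neq_0; lra).
  assert (0 < sinh (t / 2) ^ 2) by (apply pow2_gt_0; assumption). lra.
Qed.

Lemma cosh_ln u : 0 < u -> cosh (ln u) = (u + / u) / 2.
Proof. intro Hu. unfold cosh. rewrite exp_Ropp, exp_ln by exact Hu. reflexivity. Qed.

Lemma sinh_ln u : 0 < u -> sinh (ln u) = (u - / u) / 2.
Proof. intro Hu. unfold sinh. rewrite exp_Ropp, exp_ln by exact Hu. reflexivity. Qed.

Lemma Cmul_Ci u v : Cmul Ci (u, v) = (- v, u).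
Proof. unfold Cmul, Ci; simpl; f_equal; ring. Qed.

Lemma Csin_eq u v : Csin (u, v) = (sin u * cosh v, cos u * sinh v).
Proof.
  unfold Csin. rewrite Cmul_Ci.
  unfold Cdiv, Csub, Cadd, Copp, Cexp, Cmul, Cinv, Cnorm2, RtoC, Ci, cosh, sinh; simpl.
  rewrite Ropp_involutive, cos_neg, sin_neg. f_equal; field.
Qed.

Lemma Ccos_eq u v : Ccos (u, v) = (cos u * cosh v, - (sin u * sinh v)).
Proof.
  unfold Ccos. rewrite Cmul_Ci.
  unfold Cdiv, Csub, Cadd, Copp, Cexp, Cmul, Cinv, Cnorm2, RtoC, Ci, cosh, sinh; simpl.
  rewrite Ropp_involutive, cos_neg, sin_neg. f_equal; field.
Qed.

Lemma Cdiv_RtoC a b r : r <> 0 -> Cdiv (a, b) (RtoC r) = (a / r, b / r).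
Proof. intro Hr. unfold Cdiv, Cmul, Cinv, Cnorm2, RtoC; simpl; f_equal; field; exact Hr. Qed.

Lemma Cnorm2_mul p q : Cnorm2 (Cmul p q) = Cnorm2 p * Cnorm2 q.
Proof. destruct p, q; unfold Cnorm2, Cmul; simpl; ring. Qed.

Lemma Cnorm2_div p q : Cnorm2 q <> 0 -> Cnorm2 (Cdiv p q) = Cnorm2 p / Cnorm2 q.
Proof.
  destruct p as [a b], q as [c d]; unfold Cdiv, Cinv, Cnorm2, Cmul; cbn [fst snd].
  intro H. field. exact H.
Qed.

Lemma Cnorm2_sin u v : Cnorm2 (Csin (u, v)) = sin u ^ 2 + sinh v ^ 2.
Proof.
  rewrite Csin_eq. unfold Cnorm2; simpl.
  pose proof (sin2_cos2 u). pose proof (cosh_sq_sub_sinh_sq v). unfold Rsqr in *. nra.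
Qed.

Lemma Cnorm2_cos u v : Cnorm2 (Ccos (u, v)) = cos u ^ 2 + sinh v ^ 2.
Proof.
  rewrite Ccos_eq. unfold Cnorm2; simpl.
  pose proof (sin2_cos2 u). pose proof (cosh_sq_sub_sinh_sq v). unfold Rsqr in *. nra.
Qed.

(** * The kernel [Gamma_tw] *)

(* Half-angle functions are kept as opaque names for [auto_derive], so that after
   differentiation their arguments keep the shape expected by the evaluation lemmas;
   the [Derive_*] lemmas are stated in the eta-expanded form that [auto_derive] produces. *)
Definition cos_half t := cos (t / 2).

Definition sin_half t := sin (t / 2).

Definition cosh_half s := cosh (s / 2).

Definition sinh_half s := sinh (s / 2).

Lemma cosh_half_opp s : cosh_half (- s) = cosh_half s.
Proof.
  unfold cosh_half, cosh. replace (- s / 2) with (- (s / 2)) by field.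
  rewrite Ropp_involutive, Rplus_comm. reflexivity.
Qed.

Lemma cosh_half_gt_1 s : s <> 0 -> 1 < cosh_half s.
Proof. intro Hs. apply cosh_gt_1. lra. Qed.

Lemma cos_half_bound t : -1 <= cos_half t <= 1.
Proof. apply COS_bound. Qed.

Lemma cosh_half_sq_sub_cos_half_sq_pos t s : s <> 0 -> 0 < cosh_half s ^ 2 - cos_half t ^ 2.
Proof. intro Hs. pose proof (cosh_half_gt_1 s Hs). pose proof (cos_half_bound t). nra. Qed.

Lemma is_derive_cos_half t : is_derive cos_half t (- sin_half t / 2).
Proof. unfold cos_half, sin_half. auto_derive; [exact I | unfold Rdiv; ring]. Qed.

Lemma is_derive_sin_half t : is_derive sin_half t (cos_half t / 2).
Proof. unfold cos_half, sin_half. auto_derive; [exact I | unfold Rdiv; ring]. Qed.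

Lemma is_derive_cosh_half s : is_derive cosh_half s (sinh_half s / 2).
Proof. unfold cosh_half, sinh_half. auto_derive; [exact I | unfold Rdiv; ring]. Qed.

Lemma is_derive_sinh_half s : is_derive sinh_half s (cosh_half s / 2).
Proof. unfold cosh_half, sinh_half. auto_derive; [exact I | unfold Rdiv; ring]. Qed.

Lemma Derive_cos_half t : Derive (fun x => cos_half x) t = - sin_half t / 2.
Proof. apply is_derive_unique, is_derive_cos_half. Qed.

Lemma Derive_sin_half t : Derive (fun x => sin_half x) t = cos_half t / 2.
Proof. apply is_derive_unique, is_derive_sin_half. Qed.

Lemma Derive_cosh_half s : Derive (fun x => cosh_half x) s = sinh_half s / 2.
Proof. apply is_derive_unique, is_derive_cosh_half. Qed.

Lemma Derive_sinh_half s : Derive (fun x => sinh_half x) s = cosh_half s / 2.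
Proof. apply is_derive_unique, is_derive_sinh_half. Qed.

Ltac ex_derive_half :=
  lazymatch goal with
  | |- ex_derive (fun x => cos_half x) ?t => exists (- sin_half t / 2); apply is_derive_cos_half
  | |- ex_derive (fun x => sin_half x) ?t => exists (cos_half t / 2); apply is_derive_sin_half
  | |- ex_derive (fun x => cosh_half x) ?t => exists (sinh_half t / 2); apply is_derive_cosh_half
  | |- ex_derive (fun x => sinh_half x) ?t => exists (cosh_half t / 2); apply is_derive_sinh_half
  end.

Ltac rewrite_Derive_half :=
  rewrite ?Derive_cos_half, ?Derive_sin_half, ?Derive_cosh_half, ?Derive_sinh_half.

(** [log_tan_sq t s = ln |tan ((t + i s) / 4)|^2]. *)
Definition log_tan_sq t s := ln ((cosh_half s - cos_half t) / (cosh_half s + cos_half t)).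

Lemma Cnorm2_tan_quarter t s : s <> 0 ->
  Cnorm2 (Ctan (Cdiv (t, s) (RtoC 4))) = (cosh_half s - cos_half t) / (cosh_half s + cos_half t).
Proof.
  intro Hs. rewrite Cdiv_RtoC by lra. unfold Ctan.
  assert (Hsh : sinh (s / 4) <> 0) by (apply sinh_neq_0; lra).
  assert (0 < sinh (s / 4) ^ 2) by (apply pow2_gt_0; exact Hsh).
  assert (0 <= cos (t / 4) ^ 2) by (apply pow2_ge_0).
  rewrite Cnorm2_div, Cnorm2_sin, Cnorm2_cos by (rewrite Cnorm2_cos; apply Rgt_not_eq; lra).
  unfold cos_half, cosh_half.
  replace (t / 2) with (2 * (t / 4)) by field. replace (s / 2) with (2 * (s / 4)) by field.
  rewrite cosh_double, cos_2a_cos.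
  replace (sin (t / 4) ^ 2) with (1 - cos (t / 4) ^ 2)
    by (pose proof (sin2_cos2 (t / 4)); unfold Rsqr in *; nra).
  field. nra.
Qed.

Lemma Gamma_tw_eq x y x0 y0 : 0 < y -> 0 < y0 -> y <> y0 ->
  Gamma_tw (x, y) (x0, y0) = (log_tan_sq (x - x0) (y + y0) - log_tan_sq (x - x0) (y - y0)) / 2.
Proof.
  intros Hy Hy0 Hne.
  assert (Hm : 1 < cosh_half (y - y0)) by (apply cosh_half_gt_1; lra).
  assert (Hp : 1 < cosh_half (y + y0)) by (apply cosh_half_gt_1; lra).
  pose proof (cos_half_bound (x - x0)).
  unfold Gamma_tw, Cmod. cbv zeta. unfold Csub, Cadd, Copp, Cconj. cbn [fst snd].
  replace (- y + - - y0) with (- (y - y0)) by ring.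
  replace (- y + - y0) with (- (y + y0)) by ring.
  replace (y + - - y0) with (y + y0) by ring.
  change (x + - x0) with (x - x0). change (y + - y0) with (y - y0).
  rewrite Cnorm2_div.
  2:{ rewrite !Cnorm2_mul, !Cnorm2_tan_quarter, !cosh_half_opp by (intro; lra).
      apply Rgt_not_eq, Rmult_gt_0_compat; apply Rdiv_lt_0_compat; lra. }
  rewrite !Cnorm2_mul, !Cnorm2_tan_quarter, !cosh_half_opp by (intro; lra).
  unfold log_tan_sq.
  set (c := cos_half (x - x0)) in *. set (a := cosh_half (y - y0)) in *.
  set (b := cosh_half (y + y0)) in *.
  replace ((a - c) / (a + c) * ((a - c) / (a + c)) / ((b - c) / (b + c) * ((b - c) / (b + c))))
    with (((a - c) / (a + c) / ((b - c) / (b + c))) ^ 2) by (field; repeat split; lra).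
  assert (0 < (a - c) / (a + c)) by (apply Rdiv_lt_0_compat; lra).
  assert (0 < (b - c) / (b + c)) by (apply Rdiv_lt_0_compat; lra).
  rewrite sqrt_pow2, ln_div by (try apply Rlt_le; try apply Rdiv_lt_0_compat; lra).
  field.
Qed.

Definition log_tan_sq_dt t s :=
  sin_half t * cosh_half s / (cosh_half s ^ 2 - cos_half t ^ 2).

Definition log_tan_sq_ds t s :=
  cos_half t * sinh_half s / (cosh_half s ^ 2 - cos_half t ^ 2).

Definition log_tan_sq_dtt t s :=
  cosh_half s * cos_half t * ((cosh_half s ^ 2 - cos_half t ^ 2) / 2 - sin_half t ^ 2)
  / (cosh_half s ^ 2 - cos_half t ^ 2) ^ 2.

Definition log_tan_sq_dst t s :=
  - (sinh_half s * sin_half t * ((cosh_half s ^ 2 - cos_half t ^ 2) / 2 + cos_half t ^ 2))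
  / (cosh_half s ^ 2 - cos_half t ^ 2) ^ 2.

Ltac log_tan_sq_bounds t s Hs :=
  pose proof (cosh_half_gt_1 s Hs); pose proof (cos_half_bound t);
  pose proof (cosh_half_sq_sub_cos_half_sq_pos t s Hs).

Ltac solve_side_conditions :=
  repeat split;
  first [ exact I | ex_derive_half | intro; nra
        | apply Rmult_lt_0_compat; [lra | apply Rinv_0_lt_compat; lra] ].

Lemma is_derive_log_tan_sq_t t s :
  s <> 0 -> is_derive (fun t => log_tan_sq t s) t (log_tan_sq_dt t s).
Proof.
  intro Hs. log_tan_sq_bounds t s Hs. unfold log_tan_sq, log_tan_sq_dt.
  auto_derive; [solve_side_conditions | rewrite_Derive_half; field; solve_side_conditions].
Qed.

Lemma is_derive_log_tan_sq_s t s :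
  s <> 0 -> is_derive (fun s => log_tan_sq t s) s (log_tan_sq_ds t s).
Proof.
  intro Hs. log_tan_sq_bounds t s Hs. unfold log_tan_sq, log_tan_sq_ds.
  auto_derive; [solve_side_conditions | rewrite_Derive_half; field; solve_side_conditions].
Qed.

Lemma is_derive_log_tan_sq_dt t s :
  s <> 0 -> is_derive (fun t => log_tan_sq_dt t s) t (log_tan_sq_dtt t s).
Proof.
  intro Hs. log_tan_sq_bounds t s Hs. unfold log_tan_sq_dt, log_tan_sq_dtt.
  auto_derive; [solve_side_conditions | rewrite_Derive_half; field; solve_side_conditions].
Qed.

Lemma is_derive_log_tan_sq_ds t s :
  s <> 0 -> is_derive (fun t => log_tan_sq_ds t s) t (log_tan_sq_dst t s).
Proof.
  intro Hs. log_tan_sq_bounds t s Hs. unfold log_tan_sq_ds, log_tan_sq_dst.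
  auto_derive; [solve_side_conditions | rewrite_Derive_half; field; solve_side_conditions].
Qed.

(** * The drift [delta] *)

Definition cot_re x y := sin x / (cosh y - cos x).

Definition cot_im x y := - sinh y / (cosh y - cos x).

Lemma div_half_div a d : a / (d / 2) = 2 * a / d.
Proof. unfold Rdiv at 1. rewrite Rinv_div. unfold Rdiv. ring. Qed.

Lemma Ccot_half_eq x y : Ccot (x / 2, y / 2) = (cot_re x y, cot_im x y).
Proof.
  assert (Ec : cos x = 1 - 2 * sin (x / 2) * sin (x / 2))
    by (rewrite <- cos_2a_sin; f_equal; field).
  assert (Ech : cosh y = 1 + 2 * sinh (y / 2) ^ 2) by (rewrite <- cosh_double; f_equal; field).
  assert (Es : sin x = 2 * sin (x / 2) * cos (x / 2)) by (rewrite <- sin_2a; f_equal; field).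
  assert (Esh : sinh y = 2 * sinh (y / 2) * cosh (y / 2))
    by (rewrite <- sinh_double; f_equal; field).
  assert (HN : Cnorm2 (Csin (x / 2, y / 2)) = (cosh y - cos x) / 2)
    by (rewrite Cnorm2_sin, Ec, Ech; field).
  unfold Ccot, Cdiv, Cinv. rewrite HN, Csin_eq, Ccos_eq.
  unfold Cmul, cot_re, cot_im; cbn [fst snd].
  rewrite Es, Esh. f_equal; rewrite !div_half_div.
  - pose proof (cosh_sq_sub_sinh_sq (y / 2)) as E.
    replace (2 * sin (x / 2) * cos (x / 2)) with
      (2 * sin (x / 2) * cos (x / 2) * (cosh (y / 2) ^ 2 - sinh (y / 2) ^ 2)) by (rewrite E; ring).
    unfold Rdiv. ring.
  - pose proof (sin2_cos2 (x / 2)) as E. unfold Rsqr in E.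
    replace (2 * sinh (y / 2) * cosh (y / 2)) with
      (2 * sinh (y / 2) * cosh (y / 2) * (sin (x / 2) * sin (x / 2) + cos (x / 2) * cos (x / 2)))
      by (rewrite E; ring).
    unfold Rdiv. ring.
Qed.

Lemma deltaR_eq nu x y : deltaR nu (x, y) = (4 * cot_re x y - 2 * nu, 4 * cot_im x y).
Proof.
  unfold deltaR. rewrite Cdiv_RtoC, Ccot_half_eq by lra.
  unfold Csub, Cadd, Copp, Cmul, RtoC; cbn [fst snd]. f_equal; ring.
Qed.

Definition cot_re_dx x y := (cos x * cosh y - 1) / (cosh y - cos x) ^ 2.

Definition cot_im_dx x y := sin x * sinh y / (cosh y - cos x) ^ 2.

Lemma cosh_sub_cos_pos x y : y <> 0 -> 0 < cosh y - cos x.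
Proof. intro Hy. pose proof (cosh_gt_1 y Hy). pose proof (COS_bound x). lra. Qed.

Lemma is_derive_cot_re_x x y : y <> 0 -> is_derive (fun t => cot_re t y) x (cot_re_dx x y).
Proof.
  intro Hy. pose proof (cosh_sub_cos_pos x y Hy). pose proof (sin2_cos2 x). unfold Rsqr in *.
  replace (cot_re_dx x y) with ((cos x * (cosh y - cos x) - sin x * sin x) / (cosh y - cos x) ^ 2)
    by (unfold cot_re_dx; f_equal; lra).
  unfold cot_re. auto_derive; [intro; lra | field; intro; lra].
Qed.

Lemma is_derive_cot_im_x x y : y <> 0 -> is_derive (fun t => cot_im t y) x (cot_im_dx x y).
Proof.
  intro Hy. pose proof (cosh_sub_cos_pos x y Hy). unfold cot_im, cot_im_dx.
  auto_derive; [intro; lra | field; intro; lra].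
Qed.

(* Cauchy-Riemann: [cot (z / 2)] is holomorphic. *)
Lemma is_derive_cot_re_y x y : y <> 0 -> is_derive (fun t => cot_re x t) y (- cot_im_dx x y).
Proof.
  intro Hy. pose proof (cosh_sub_cos_pos x y Hy). unfold cot_re, cot_im_dx.
  auto_derive; [intro; lra | field; intro; lra].
Qed.

Lemma is_derive_cot_im_y x y : y <> 0 -> is_derive (fun t => cot_im x t) y (cot_re_dx x y).
Proof.
  intro Hy. pose proof (cosh_sub_cos_pos x y Hy). pose proof (cosh_sq_sub_sinh_sq y).
  replace (cot_re_dx x y) with
    (- (cosh y * (cosh y - cos x) - sinh y * sinh y) / (cosh y - cos x) ^ 2)
    by (unfold cot_re_dx; f_equal; nra).
  unfold cot_im. auto_derive; [intro; lra | field; intro; lra].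
Qed.

Lemma cot_re_0 y : cot_re 0 y = 0.
Proof. unfold cot_re. rewrite sin_0. unfold Rdiv. ring. Qed.

Lemma cot_im_neg x y : 0 < y -> cot_im x y < 0.
Proof.
  intro Hy. unfold cot_im.
  assert (0 < sinh y) by (rewrite <- sinh_0; apply sinh_lt, Hy).
  pose proof (cosh_sub_cos_pos x y ltac:(lra)).
  unfold Rdiv. rewrite Ropp_mult_distr_l_reverse. apply Ropp_lt_gt_0_contravar.
  apply Rmult_lt_0_compat; [assumption | apply Rinv_0_lt_compat; assumption].
Qed.

Lemma is_derive_cot_re_dx_x x y : y <> 0 -> sin x = 0 -> is_derive (fun t => cot_re_dx t y) x 0.
Proof.
  intros Hy Hs. pose proof (cosh_sub_cos_pos x y Hy). unfold cot_re_dx.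
  auto_derive; [repeat split; intro; nra | rewrite Hs; field; intro; lra].
Qed.

Lemma is_derive_cot_im_dx_x x y : y <> 0 -> sin x = 0 ->
  is_derive (fun t => cot_im_dx t y) x (cos x * sinh y / (cosh y - cos x) ^ 2).
Proof.
  intros Hy Hs. pose proof (cosh_sub_cos_pos x y Hy). unfold cot_im_dx.
  auto_derive; [repeat split; intro; nra | rewrite Hs; field; intro; lra].
Qed.

(** * Partial derivatives and Lie derivatives *)

Lemma is_derive_half_sub (f g : R -> R) (x a b : R) :
  is_derive f x a -> is_derive g x b -> is_derive (fun t => (f t - g t) / 2) x ((a - b) / 2).
Proof.
  intros Hf Hg. apply (is_derive_ext (fun t => / 2 * minus (f t) (g t))).
  { intro t. unfold minus, plus, opp; simpl. field. }
  replace ((a - b) / 2) with (/ 2 * minus a b) by (unfold minus, plus, opp; simpl; field).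
  apply is_derive_scal. exact (is_derive_minus _ _ _ _ _ Hf Hg).
Qed.

Lemma is_derive_half_add (f g : R -> R) (x a b : R) :
  is_derive f x a -> is_derive g x b -> is_derive (fun t => (f t + g t) / 2) x ((a + b) / 2).
Proof.
  intros Hf Hg. apply (is_derive_ext (fun t => / 2 * plus (f t) (g t))).
  { intro t. unfold plus; simpl. field. }
  replace ((a + b) / 2) with (/ 2 * plus a b) by (unfold plus; simpl; field).
  apply is_derive_scal. exact (is_derive_plus _ _ _ _ _ Hf Hg).
Qed.

Lemma is_derive_shift (f : R -> R) (c x l : R) :
  is_derive f (c + x) l -> is_derive (fun t => f (c + t)) x l.
Proof.
  intro H. rewrite <- (Rmult_1_l l).
  refine (is_derive_comp f (fun t => c + t) x l 1 H _).
  auto_derive; [exact I | ring].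
Qed.

Lemma is_derive_reflect (f : R -> R) (c x l : R) :
  is_derive f (c - x) l -> is_derive (fun t => f (c - t)) x (- l).
Proof.
  intro H. replace (- l) with (-1 * l) by ring.
  refine (is_derive_comp f (fun t => c - t) x l (-1) H _).
  auto_derive; [exact I | ring].
Qed.

Definition curryC (eta : Cx -> R) (x y : R) : R := eta (x, y).

Lemma px_unique f x y l : is_derive (fun t => f t y) x l -> px f x y = l.
Proof.
  intro H. apply is_derive_Reals in H. unfold px.
  apply (uniqueness_limite (fun t => f t y) x); [| exact H].
  apply (epsilon_spec (inhabits 0) (fun l => derivable_pt_lim (fun t => f t y) x l)).
  exists l; exact H.
Qed.

Lemma py_unique f x y l : is_derive (fun t => f x t) y l -> py f x y = l.
Proof.
  intro H. apply is_derive_Reals in H. unfold py.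
  apply (uniqueness_limite (fun t => f x t) y); [| exact H].
  apply (epsilon_spec (inhabits 0) (fun l => derivable_pt_lim (fun t => f x t) y l)).
  exists l; exact H.
Qed.

Lemma is_derive_px f x y : has_px f x y -> is_derive (fun t => f t y) x (px f x y).
Proof.
  intros [l Hl]. apply is_derive_Reals in Hl. rewrite (px_unique f x y l Hl). exact Hl.
Qed.

Lemma is_derive_py f x y : has_py f x y -> is_derive (fun t => f x t) y (py f x y).
Proof.
  intros [l Hl]. apply is_derive_Reals in Hl. rewrite (py_unique f x y l Hl). exact Hl.
Qed.

Lemma px_const (c x y : R) : px (fun _ _ => c) x y = 0.
Proof. apply px_unique. auto_derive; [exact I | ring]. Qed.

Lemma py_const (c x y : R) : py (fun _ _ => c) x y = 0.
Proof. apply py_unique. auto_derive; [exact I | ring]. Qed.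

Lemma px_scal f c x y : has_px f x y -> px (fun a b => c * f a b) x y = c * px f x y.
Proof. intro H. apply px_unique, is_derive_scal, is_derive_px, H. Qed.

Lemma locally_ball x d (P : R -> Prop) :
  0 < d -> (forall t, Rabs (t - x) < d -> P t) -> locally x P.
Proof. intros Hd H. exists (mkposreal d Hd). exact H. Qed.

Lemma locally_pos_neq y y' (P : R -> Prop) : 0 < y -> y <> y' ->
  (forall t, 0 < t -> t <> y' -> P t) -> locally y P.
Proof.
  intros Hy Hne H. apply (locally_ball y (Rmin y (Rabs (y - y')))).
  - apply Rmin_pos; [exact Hy | apply Rabs_pos_lt; lra].
  - intros t Ht. pose proof (Rmin_l y (Rabs (y - y'))). pose proof (Rmin_r y (Rabs (y - y'))).
    apply H.
    + apply Rabs_def2 in Ht. lra.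
    + intro E. subst t. rewrite Rabs_minus_sym in Ht. lra.
Qed.

Lemma Derive_px f x y : has_px f x y -> Derive (fun t => f t y) x = px f x y.
Proof. intro H. apply is_derive_unique, is_derive_px, H. Qed.

Lemma Derive_py f x y : has_py f x y -> Derive (fun t => f x t) y = py f x y.
Proof. intro H. apply is_derive_unique, is_derive_py, H. Qed.

Lemma continuity_2d_pt_of_cont2_at g h x y :
  0 < y -> cont2_at h x y -> (forall u v, 0 < v -> g u v = h u v) -> continuity_2d_pt g x y.
Proof.
  intros Hy Hc Hgh eps. destruct (Hc eps (cond_pos eps)) as [d [Hd Hd']].
  assert (Hm : 0 < Rmin d (y / 2)) by (apply Rmin_pos; lra).
  exists (mkposreal _ Hm). intros u v Hu Hv. simpl in Hu, Hv.
  pose proof (Rmin_l d (y / 2)). pose proof (Rmin_r d (y / 2)).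
  assert (0 < v) by (apply Rabs_def2 in Hv; lra).
  rewrite !Hgh by lra. apply Hd'; lra.
Qed.

Section Schwarz.

Variable eta : Cx -> R.

Hypothesis HC : C2_on_H eta.

Lemma Derive_dy_then_dx u v :
  0 < v -> Derive (fun z => Derive (fun t => curryC eta z t) v) u = px (py (curryC eta)) u v.
Proof.
  intro Hv. rewrite (Derive_ext _ (fun z => py (curryC eta) z v)).
  - apply Derive_px, (HC u v Hv).
  - intro z. apply Derive_py, (HC z v Hv).
Qed.

Lemma Derive_dx_then_dy u v :
  0 < v -> Derive (fun z => Derive (fun t => curryC eta t z) u) v = py (px (curryC eta)) u v.
Proof.
  intro Hv. rewrite (Derive_ext_loc _ (fun z => px (curryC eta) u z)).
  - apply Derive_py, (HC u v Hv).
  - apply (locally_ball v v); [exact Hv |]. intros z Hz. apply Rabs_def2 in Hz.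
    apply Derive_px, (HC u z). lra.
Qed.

Lemma px_py_comm x y : 0 < y -> px (py (curryC eta)) x y = py (px (curryC eta)) x y.
Proof.
  intro Hy. rewrite <- Derive_dy_then_dx, <- Derive_dx_then_dy by exact Hy.
  assert (Hy2 : 0 < y / 2) by lra.
  apply Schwarz.
  - exists (mkposreal _ Hy2). intros u v _ Hv. simpl in Hv. apply Rabs_def2 in Hv.
    assert (Hv0 : 0 < v) by lra.
    destruct (HC u v Hv0) as (h1 & h2 & _ & h4 & h5 & _).
    split; [| split; [| split]].
    + eexists. apply is_derive_px, h1.
    + eexists. apply is_derive_py, h2.
    + eapply ex_derive_ext.
      { intro z. symmetry. apply Derive_py, (HC z v Hv0). }
      eexists. apply is_derive_px, h5.
    + eapply ex_derive_ext_loc.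
      { apply (locally_ball v v); [exact Hv0 |]. intros z Hz. apply Rabs_def2 in Hz.
        symmetry. apply Derive_px, (HC u z). lra. }
      eexists. apply is_derive_py, h4.
  - apply (continuity_2d_pt_of_cont2_at _ (px (py (curryC eta)))); [exact Hy | apply HC, Hy |].
    exact Derive_dy_then_dx.
  - apply (continuity_2d_pt_of_cont2_at _ (py (px (curryC eta)))); [exact Hy | apply HC, Hy |].
    exact Derive_dx_then_dy.
Qed.

End Schwarz.

Lemma Lsc_re v (G : Cx -> R) z :
  fst (Lsc v (fun u => RtoC (G u)) z) =
  fst (v z) * px (curryC G) (fst z) (snd z) + snd (v z) * py (curryC G) (fst z) (snd z).
Proof.
  unfold Lsc, dz, dzb, dxC, dyC, Cmul, Cadd, Csub, Copp, Cconj, RtoC, Ci; cbn [fst snd].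
  unfold Cadd; cbn [fst snd]. rewrite !px_const, !py_const.
  change (fun x y => G (x, y)) with (curryC G). field.
Qed.

Lemma LGam_re v G z w :
  fst (LGam v G z w) =
    fst (v z) * px (curryC (fun u => G u w)) (fst z) (snd z)
  + snd (v z) * py (curryC (fun u => G u w)) (fst z) (snd z)
  + (fst (v w) * px (curryC (G z)) (fst w) (snd w)
     + snd (v w) * py (curryC (G z)) (fst w) (snd w)).
Proof. unfold LGam, Cadd. cbn [fst]. rewrite !Lsc_re. reflexivity. Qed.

Lemma Lpps_sigmaR mu mus kappa eta z :
  Lpps mu mus (sigmaR kappa) eta z = (-2 * sqrt kappa * px (curryC eta) (fst z) (snd z), 0).
Proof.
  unfold Lpps, Lsc, dz, dzb, dxC, dyC, sigmaR, Cmul, Cadd, Csub, Copp, Cconj, RtoC, Ci.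
  cbn [fst snd]. unfold Cmul, Cadd; cbn [fst snd].
  rewrite !px_const, !py_const. change (fun x y => eta (x, y)) with (curryC eta).
  f_equal; field.
Qed.

Lemma Lpps2_sigmaR_re mu mus kappa eta x y : 0 <= kappa -> has_px (px (curryC eta)) x y ->
  fst (Lpps2 mu mus (sigmaR kappa) eta (x, y)) = 4 * kappa * px (px (curryC eta)) x y.
Proof.
  intros Hk H. unfold Lpps2.
  rewrite (functional_extensionality (Lpps mu mus (sigmaR kappa) eta)
             (fun u => RtoC (-2 * sqrt kappa * px (curryC eta) (fst u) (snd u))))
    by (intro u; apply Lpps_sigmaR).
  rewrite Lsc_re. unfold sigmaR, RtoC; cbn [fst snd].
  unfold curryC at 1; cbn [fst snd]. rewrite px_scal by exact H.
  rewrite <- (sqrt_sqrt kappa) at 3 by exact Hk. ring.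
Qed.

Lemma dz_deltaR nu x y : y <> 0 ->
  dz (deltaR nu) (x, y) = (4 * cot_re_dx x y, 4 * cot_im_dx x y).
Proof.
  intro Hy.
  pose proof (is_derive_cot_re_x x y Hy). pose proof (is_derive_cot_im_x x y Hy).
  pose proof (is_derive_cot_re_y x y Hy). pose proof (is_derive_cot_im_y x y Hy).
  unfold dz, dxC, dyC; cbn [fst snd].
  rewrite (px_unique _ _ _ (4 * cot_re_dx x y)), (px_unique _ _ _ (4 * cot_im_dx x y)),
    (py_unique _ _ _ (4 * - cot_im_dx x y)), (py_unique _ _ _ (4 * cot_re_dx x y)).
  - unfold Cmul, Csub, Cadd, Copp, RtoC, Ci; cbn [fst snd]. f_equal; field.
  all: eapply is_derive_ext; [intro t; rewrite deltaR_eq; reflexivity |]; cbn [fst snd].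
  all: auto_derive; [eexists; eassumption | erewrite is_derive_unique by eassumption; ring].
Qed.

Lemma Lpps_deltaR_re mu mus nu eta x y : y <> 0 ->
  fst (Lpps mu mus (deltaR nu) eta (x, y)) =
    (4 * cot_re x y - 2 * nu) * px (curryC eta) x y + 4 * cot_im x y * py (curryC eta) x y
  + 4 * (fst mu + fst mus) * cot_re_dx x y + 4 * (snd mus - snd mu) * cot_im_dx x y.
Proof.
  intro Hy. unfold Lpps, Cadd at 1; cbn [fst].
  rewrite Lsc_re, deltaR_eq, dz_deltaR by exact Hy.
  unfold Cadd, Cmul, Cconj; cbn [fst snd]. ring.
Qed.

Lemma first_equation_re kappa nu mu mus eta x y :
  0 < kappa -> 0 < y -> has_px (px (curryC eta)) x y ->
  Cadd (Lpps mu mus (deltaR nu) eta (x, y))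
       (Cmul (RtoC (/ 2)) (Lpps2 mu mus (sigmaR kappa) eta (x, y))) = RtoC 0 ->
  (4 * cot_re x y - 2 * nu) * px (curryC eta) x y + 4 * cot_im x y * py (curryC eta) x y
  + 4 * (fst mu + fst mus) * cot_re_dx x y + 4 * (snd mus - snd mu) * cot_im_dx x y
  + 2 * kappa * px (px (curryC eta)) x y = 0.
Proof.
  intros Hk Hy Hxx H. apply (f_equal fst) in H.
  unfold Cadd at 1, Cmul, RtoC in H; cbn [fst snd] in H.
  rewrite Lpps_deltaR_re, Lpps2_sigmaR_re in H by (assumption || lra).
  lra.
Qed.

(** * The second equation at [w0] *)

(* With the base point w0 = 2 i ln 3 and test heights 2 ln a, every hyperbolic
   function that occurs is rational. *)
Definition h0 := 2 * ln 3.

Definition w0 : Cx := (0, h0).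

Lemma h0_pos : 0 < h0.
Proof.
  unfold h0. assert (0 < ln 3) by (rewrite <- ln_1; apply ln_increasing; lra). lra.
Qed.

Definition Gamma_dx x y := (log_tan_sq_dt x (y + h0) - log_tan_sq_dt x (y - h0)) / 2.

Definition Gamma_dy x y := (log_tan_sq_ds x (y + h0) - log_tan_sq_ds x (y - h0)) / 2.

Definition Gamma_dv x y := (log_tan_sq_ds x (y + h0) + log_tan_sq_ds x (y - h0)) / 2.

Lemma Gamma_tw_at_w0 x y : 0 < y -> y <> h0 ->
  Gamma_tw (x, y) w0 = (log_tan_sq x (y + h0) - log_tan_sq x (y - h0)) / 2.
Proof.
  intros Hy Hne. unfold w0. rewrite Gamma_tw_eq by (exact Hy || exact h0_pos || exact Hne).
  rewrite Rminus_0_r. reflexivity.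
Qed.

Lemma px_Gamma_tw_z x y : 0 < y -> y <> h0 ->
  px (curryC (fun u => Gamma_tw u w0)) x y = Gamma_dx x y.
Proof.
  intros Hy Hne. pose proof h0_pos. apply px_unique.
  eapply is_derive_ext. { intro t. symmetry. apply Gamma_tw_at_w0; assumption. }
  apply is_derive_half_sub; apply is_derive_log_tan_sq_t; intro; lra.
Qed.

Lemma py_Gamma_tw_z x y : 0 < y -> y <> h0 ->
  py (curryC (fun u => Gamma_tw u w0)) x y = Gamma_dy x y.
Proof.
  intros Hy Hne. pose proof h0_pos. apply py_unique.
  eapply is_derive_ext_loc.
  { apply (locally_pos_neq y h0); [exact Hy | exact Hne |].
    intros t Ht Htne. symmetry. apply Gamma_tw_at_w0; assumption. }
  apply is_derive_half_sub.
  - apply (is_derive_ext (fun t => log_tan_sq x (h0 + t))); [intro t; f_equal; ring |].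
    apply is_derive_shift. rewrite Rplus_comm. apply is_derive_log_tan_sq_s. intro; lra.
  - apply (is_derive_ext (fun t => log_tan_sq x (- h0 + t))); [intro t; f_equal; ring |].
    apply is_derive_shift. replace (- h0 + y) with (y - h0) by ring.
    apply is_derive_log_tan_sq_s. intro; lra.
Qed.

Lemma px_Gamma_tw_w x y : 0 < y -> y <> h0 ->
  px (curryC (Gamma_tw (x, y))) 0 h0 = - Gamma_dx x y.
Proof.
  intros Hy Hne. pose proof h0_pos. apply px_unique.
  eapply is_derive_ext.
  { intro t. symmetry. unfold curryC. apply Gamma_tw_eq; assumption. }
  replace (- Gamma_dx x y) with
    ((- log_tan_sq_dt (x - 0) (y + h0) - - log_tan_sq_dt (x - 0) (y - h0)) / 2)
    by (unfold Gamma_dx; rewrite Rminus_0_r; field).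
  apply is_derive_half_sub; apply (is_derive_reflect (fun t => log_tan_sq t _));
    apply is_derive_log_tan_sq_t; intro; lra.
Qed.

Lemma py_Gamma_tw_w x y : 0 < y -> y <> h0 ->
  py (curryC (Gamma_tw (x, y))) 0 h0 = Gamma_dv x y.
Proof.
  intros Hy Hne. pose proof h0_pos. apply py_unique.
  eapply is_derive_ext_loc.
  { apply (locally_pos_neq h0 y); [exact h0_pos | intro E; apply Hne; symmetry; exact E |].
    intros t Ht Htne. symmetry. unfold curryC. rewrite Gamma_tw_eq by (assumption || lra).
    rewrite Rminus_0_r. reflexivity. }
  replace (Gamma_dv x y) with
    ((log_tan_sq_ds x (y + h0) - - log_tan_sq_ds x (y - h0)) / 2)
    by (unfold Gamma_dv; field).
  apply is_derive_half_sub.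
  - apply (is_derive_shift (fun s => log_tan_sq x s)). apply is_derive_log_tan_sq_s. intro; lra.
  - apply (is_derive_reflect (fun s => log_tan_sq x s)). apply is_derive_log_tan_sq_s. intro; lra.
Qed.

Definition gamma_drift x y :=
  4 * cot_re x y * Gamma_dx x y + 4 * cot_im x y * Gamma_dy x y + 4 * cot_im 0 h0 * Gamma_dv x y.

(* [nu] cancels: Re delta(w0) = - 2 nu and the derivatives of Gamma in Re z and in
   Re w are opposite. *)
Lemma LGam_deltaR_w0_re nu x y : 0 < y -> y <> h0 ->
  fst (LGam (deltaR nu) Gamma_tw (x, y) w0) = gamma_drift x y.
Proof.
  intros Hy Hne. rewrite LGam_re. change (fst w0) with 0. change (snd w0) with h0. cbn [fst snd].
  rewrite px_Gamma_tw_z, py_Gamma_tw_z, px_Gamma_tw_w, py_Gamma_tw_w by assumption.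
  unfold w0. rewrite !deltaR_eq, cot_re_0. unfold gamma_drift. cbn [fst snd]. ring.
Qed.

Lemma second_equation_re kappa nu mu mus eta x y : 0 <= kappa -> 0 < y -> y <> h0 ->
  Cadd (LGam (deltaR nu) Gamma_tw (x, y) w0)
       (Cmul (Lpps mu mus (sigmaR kappa) eta (x, y)) (Lpps mu mus (sigmaR kappa) eta w0))
  = RtoC 0 ->
  gamma_drift x y + 4 * kappa * (px (curryC eta) x y * px (curryC eta) 0 h0) = 0.
Proof.
  intros Hk Hy Hne H. apply (f_equal fst) in H.
  unfold Cadd at 1, RtoC in H; cbn [fst] in H.
  rewrite LGam_deltaR_w0_re, !Lpps_sigmaR in H by assumption.
  unfold Cmul, w0 in H; cbn [fst snd] in H.
  rewrite <- (sqrt_sqrt kappa Hk). lra.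
Qed.

Definition Gamma_dxx x y := (log_tan_sq_dtt x (y + h0) - log_tan_sq_dtt x (y - h0)) / 2.

Definition Gamma_dyx x y := (log_tan_sq_dst x (y + h0) - log_tan_sq_dst x (y - h0)) / 2.

Definition Gamma_dvx x y := (log_tan_sq_dst x (y + h0) + log_tan_sq_dst x (y - h0)) / 2.

Definition gamma_drift_dx x y :=
  4 * cot_re_dx x y * Gamma_dx x y + 4 * cot_re x y * Gamma_dxx x y
  + 4 * cot_im_dx x y * Gamma_dy x y + 4 * cot_im x y * Gamma_dyx x y
  + 4 * cot_im 0 h0 * Gamma_dvx x y.

Lemma is_derive_gamma_drift_x x y : 0 < y -> y <> h0 ->
  is_derive (fun t => gamma_drift t y) x (gamma_drift_dx x y).
Proof.
  intros Hy Hne. pose proof h0_pos.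
  assert (Hp : y + h0 <> 0) by (intro; lra). assert (Hm : y - h0 <> 0) by (intro; lra).
  assert (Hy0 : y <> 0) by (intro; lra).
  pose proof (is_derive_cot_re_x x y Hy0). pose proof (is_derive_cot_im_x x y Hy0).
  assert (is_derive (fun t => Gamma_dx t y) x (Gamma_dxx x y))
    by (apply is_derive_half_sub; apply is_derive_log_tan_sq_dt; assumption).
  assert (is_derive (fun t => Gamma_dy t y) x (Gamma_dyx x y))
    by (apply is_derive_half_sub; apply is_derive_log_tan_sq_ds; assumption).
  assert (is_derive (fun t => Gamma_dv t y) x (Gamma_dvx x y))
    by (apply is_derive_half_add; apply is_derive_log_tan_sq_ds; assumption).
  unfold gamma_drift, gamma_drift_dx.
  auto_derive; [repeat split; eexists; eassumption |].
  repeat (erewrite is_derive_unique by eassumption). ring.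
Qed.

Definition eta_dy_formula kappa nu U V k x y :=
  - ((4 * cot_re x y - 2 * nu) * (k * gamma_drift x y) + 4 * U * cot_re_dx x y
     + 4 * V * cot_im_dx x y + 2 * kappa * (k * gamma_drift_dx x y)) / (4 * cot_im x y).

Lemma is_derive_eta_dy_formula_x kappa nu U V k x y d : sin x = 0 -> 0 < y -> y <> h0 ->
  is_derive (fun t => gamma_drift_dx t y) x d ->
  is_derive (fun t => eta_dy_formula kappa nu U V k t y) x
    (- (4 * cot_re_dx x y * (k * gamma_drift x y) - 2 * nu * (k * gamma_drift_dx x y)
        + 4 * V * (cos x * sinh y / (cosh y - cos x) ^ 2) + 2 * kappa * (k * d))
     / (4 * cot_im x y)).
Proof.
  intros Hs Hy Hne Hd. assert (Hy0 : y <> 0) by (intro; lra).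
  pose proof (cot_im_neg x y Hy).
  assert (Hre : cot_re x y = 0) by (unfold cot_re; rewrite Hs; unfold Rdiv; ring).
  assert (Him : cot_im_dx x y = 0) by (unfold cot_im_dx; rewrite Hs; unfold Rdiv; ring).
  pose proof (is_derive_cot_re_x x y Hy0). pose proof (is_derive_cot_im_x x y Hy0).
  pose proof (is_derive_cot_re_dx_x x y Hy0 Hs). pose proof (is_derive_cot_im_dx_x x y Hy0 Hs).
  pose proof (is_derive_gamma_drift_x x y Hy Hne).
  unfold eta_dy_formula.
  auto_derive; [repeat split; try (eexists; eassumption); intro; lra |].
  repeat (erewrite is_derive_unique by eassumption).
  pose proof (cosh_sub_cos_pos x y Hy0).
  rewrite Hre, Him. field. split; intro; lra.
Qed.

(** * Evaluation at three points *)

Lemma cos_half_0 : cos_half 0 = 1.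
Proof. unfold cos_half. rewrite Rdiv_0_l. apply cos_0. Qed.

Lemma sin_half_0 : sin_half 0 = 0.
Proof. unfold sin_half. rewrite Rdiv_0_l. apply sin_0. Qed.

Lemma cos_half_PI : cos_half PI = 0.
Proof. apply cos_PI2. Qed.

Lemma sin_half_PI : sin_half PI = 1.
Proof. apply sin_PI2. Qed.

Lemma cosh_half_two_ln a : 0 < a -> cosh_half (2 * ln a) = (a + / a) / 2.
Proof.
  intro Ha. unfold cosh_half. replace (2 * ln a / 2) with (ln a) by field. apply cosh_ln, Ha.
Qed.

Lemma sinh_half_two_ln a : 0 < a -> sinh_half (2 * ln a) = (a - / a) / 2.
Proof.
  intro Ha. unfold sinh_half. replace (2 * ln a / 2) with (ln a) by field. apply sinh_ln, Ha.
Qed.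

Lemma two_ln_sq a : 0 < a -> 2 * ln a = ln (a * a).
Proof. intro Ha. rewrite ln_mult by exact Ha. ring. Qed.

Lemma cosh_two_ln a : 0 < a -> cosh (2 * ln a) = (a * a + / (a * a)) / 2.
Proof. intro Ha. rewrite two_ln_sq by exact Ha. apply cosh_ln, Rmult_lt_0_compat; exact Ha. Qed.

Lemma sinh_two_ln a : 0 < a -> sinh (2 * ln a) = (a * a - / (a * a)) / 2.
Proof. intro Ha. rewrite two_ln_sq by exact Ha. apply sinh_ln, Rmult_lt_0_compat; exact Ha. Qed.

Lemma two_ln_add_h0 a : 0 < a -> 2 * ln a + h0 = 2 * ln (a * 3).
Proof. intro Ha. unfold h0. rewrite ln_mult by lra. ring. Qed.

Lemma two_ln_add_opp_h0 a : 0 < a -> 2 * ln a + - h0 = 2 * ln (a / 3).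
Proof. intro Ha. unfold h0. rewrite ln_div by lra. ring. Qed.

Lemma two_ln_pos a : 1 < a -> 0 < 2 * ln a.
Proof. intro Ha. assert (0 < ln a) by (rewrite <- ln_1; apply ln_increasing; lra). lra. Qed.

Lemma two_ln_neq_h0 a : 0 < a -> a <> 3 -> 2 * ln a <> h0.
Proof. intros Ha Ha3 E. apply Ha3, ln_inv; [exact Ha | lra | unfold h0 in E; lra]. Qed.

(* [auto_derive] writes differences as [a + - b]. *)
Ltac evaluate :=
  unfold Rminus; (rewrite ?two_ln_add_h0, ?two_ln_add_opp_h0 by lra);
  unfold h0;
  (rewrite ?cosh_half_two_ln, ?sinh_half_two_ln, ?cosh_two_ln, ?sinh_two_ln by lra);
  rewrite ?cos_half_0, ?sin_half_0, ?cos_half_PI, ?sin_half_PI, ?sin_0, ?cos_0, ?sin_PI, ?cos_PI.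

Ltac evaluate_in E :=
  unfold cot_im, cot_re_dx in E; revert E; evaluate; intro E; field_simplify in E.

Ltac split_conj := repeat match goal with |- _ /\ _ => split end.

Ltac numeric_neq_0 := let H := fresh in intro H; field_simplify in H; lra.

Definition drift_jet x y F Fx Fxx Fy : Prop :=
  gamma_drift x y = F /\ gamma_drift_dx x y = Fx /\
  is_derive (fun t => gamma_drift_dx t y) x Fxx /\ is_derive (fun t => gamma_drift x t) y Fy.

Ltac unfold_drift :=
  unfold gamma_drift, gamma_drift_dx, Gamma_dx, Gamma_dy, Gamma_dv, Gamma_dxx, Gamma_dyx, Gamma_dvx,
    log_tan_sq_dt, log_tan_sq_ds, log_tan_sq_dtt, log_tan_sq_dst,
    cot_re, cot_im, cot_re_dx, cot_im_dx.

Ltac prove_drift_jet :=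
  refine (conj _ (conj _ (conj _ _))); unfold_drift; try auto_derive;
  lazymatch goal with
  | |- _ = _ => rewrite_Derive_half; evaluate; field
  | |- _ => split_conj; first [exact I | ex_derive_half | evaluate; numeric_neq_0]
  end.

Lemma drift_jet_A : drift_jet 0 (2 * ln 2) (-4) 0 (41 / 9) (10 / 3).
Proof. prove_drift_jet. Qed.

Lemma drift_jet_B : drift_jet PI (2 * ln 2) 0 (18 / 25) 0 0.
Proof. prove_drift_jet. Qed.

Lemma drift_jet_C : drift_jet PI (2 * ln 4) 0 (180 / 289) 0 0.
Proof. prove_drift_jet. Qed.

(** * Compatibility of the mixed partials *)

Section Compatibility.

Variables (kappa nu k : R) (mu mus : Cx) (eta : Cx -> R).
Hypothesis Hkappa : 0 < kappa.
Hypothesis HC : C2_on_H eta.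
Hypothesis Hfirst : forall z, inH z ->
  Cadd (Lpps mu mus (deltaR nu) eta z)
       (Cmul (RtoC (/ 2)) (Lpps2 mu mus (sigmaR kappa) eta z)) = RtoC 0.
Hypothesis Hdx : forall x y, 0 < y -> y <> h0 -> px (curryC eta) x y = k * gamma_drift x y.

Local Notation U := (fst mu + fst mus).
Local Notation V := (snd mus - snd mu).

Lemma eta_dxx x y : 0 < y -> y <> h0 -> px (px (curryC eta)) x y = k * gamma_drift_dx x y.
Proof.
  intros Hy Hne. apply px_unique.
  eapply is_derive_ext. { intro t. symmetry. apply Hdx; assumption. }
  apply is_derive_scal, is_derive_gamma_drift_x; assumption.
Qed.

Lemma eta_dy x y : 0 < y -> y <> h0 ->
  py (curryC eta) x y = eta_dy_formula kappa nu U V k x y.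
Proof.
  intros Hy Hne. destruct (HC x y Hy) as (_ & _ & Hxx & _).
  pose proof (first_equation_re kappa nu mu mus eta x y Hkappa Hy Hxx (Hfirst (x, y) Hy)) as E.
  rewrite Hdx, eta_dxx in E by assumption.
  pose proof (cot_im_neg x y Hy). unfold eta_dy_formula.
  apply (Rmult_eq_reg_l (4 * cot_im x y)); [| intro; lra].
  field_simplify; [lra | intro; lra].
Qed.

Lemma compatibility x y a b : 0 < y -> y <> h0 ->
  is_derive (fun t => gamma_drift x t) y a ->
  is_derive (fun t => eta_dy_formula kappa nu U V k t y) x b ->
  k * a = b.
Proof.
  intros Hy Hne Ha Hb.
  assert (Hyx : px (py (curryC eta)) x y = b).
  { apply px_unique. eapply is_derive_ext; [| exact Hb].
    intro t. symmetry. apply eta_dy; assumption. }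
  assert (Hxy : py (px (curryC eta)) x y = k * a).
  { apply py_unique. eapply is_derive_ext_loc.
    - apply (locally_pos_neq y h0); [exact Hy | exact Hne |].
      intros t Ht Htne. symmetry. apply Hdx; assumption.
    - apply is_derive_scal, Ha. }
  rewrite <- Hxy, <- Hyx. symmetry. apply px_py_comm; assumption.
Qed.

Lemma compatibility_at_lattice x y F Fx Fxx Fy : sin x = 0 -> 0 < y -> y <> h0 ->
  drift_jet x y F Fx Fxx Fy ->
  k * Fy * (4 * cot_im x y) =
  - (4 * cot_re_dx x y * (k * F) - 2 * nu * (k * Fx)
     + 4 * V * (cos x * sinh y / (cosh y - cos x) ^ 2) + 2 * kappa * (k * Fxx)).
Proof.
  intros Hs Hy Hne (HF & HFx & HFxx & HFy).
  rewrite (compatibility x y _ _ Hy Hne HFy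
            (is_derive_eta_dy_formula_x kappa nu U V k x y Fxx Hs Hy Hne HFxx)).
  rewrite HF, HFx. pose proof (cot_im_neg x y Hy).
  pose proof (cosh_sub_cos_pos x y ltac:(lra)). field. split; intro; lra.
Qed.

Lemma compatibility_A : 246 * kappa * k + 160 * V = 984 * k.
Proof.
  pose proof (compatibility_at_lattice 0 (2 * ln 2) _ _ _ _ sin_0 (two_ln_pos 2 ltac:(lra))
    (two_ln_neq_h0 2 ltac:(lra) ltac:(lra)) drift_jet_A) as E.
  evaluate_in E. lra.
Qed.

Lemma compatibility_B : 15 * nu * k + 8 * V = 0.
Proof.
  pose proof (compatibility_at_lattice PI (2 * ln 2) _ _ _ _ sin_PI (two_ln_pos 2 ltac:(lra))
    (two_ln_neq_h0 2 ltac:(lra) ltac:(lra)) drift_jet_B) as E.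
  evaluate_in E. lra.
Qed.

Lemma compatibility_C : 51 * nu * k + 16 * V = 0.
Proof.
  pose proof (compatibility_at_lattice PI (2 * ln 4) _ _ _ _ sin_PI (two_ln_pos 4 ltac:(lra))
    (two_ln_neq_h0 4 ltac:(lra) ltac:(lra)) drift_jet_C) as E.
  evaluate_in E. lra.
Qed.

End Compatibility.

Lemma Csub_neq_real_of_Im z w : snd z <> snd w -> forall r, Csub z w <> RtoC r.
Proof.
  intros H r E. apply (f_equal snd) in E. unfold Csub, Cadd, Copp, RtoC in E; cbn in E.
  apply H. lra.
Qed.

Lemma proportional_of_product_eq (P : R -> R -> Prop) (g e : R -> R -> R) (c e0 x0 y0 : R) :
  c <> 0 -> P x0 y0 -> g x0 y0 <> 0 ->
  (forall x y, P x y -> g x y + c * (e x y * e0) = 0) ->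
  exists k, k <> 0 /\ forall x y, P x y -> e x y = k * g x y.
Proof.
  intros Hc HP0 Hg0 H.
  assert (He0 : e0 <> 0) by (intro E; pose proof (H x0 y0 HP0) as H0; rewrite E in H0; lra).
  exists (- / (c * e0)). split.
  - apply Ropp_neq_0_compat, Rinv_neq_0_compat, Rmult_integral_contrapositive. tauto.
  - intros x y Hxy. pose proof (H x y Hxy).
    apply (Rmult_eq_reg_l (c * e0)); [| apply Rmult_integral_contrapositive; tauto].
    field_simplify; [lra | tauto].
Qed.

Theorem proposition6p1 :
  forall (kappa nu : R), 0 < kappa ->
  forall (mu mus : Cx) (eta : Cx -> R),
    C2_on_H eta ->
    (forall z, inH z ->
       Cadd (Lpps mu mus (deltaR nu) eta z)
            (Cmul (RtoC (/2)) (Lpps2 mu mus (sigmaR kappa) eta z)) = RtoC 0) ->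
    (forall z w, inH z -> inH w -> (forall k : Z, Csub z w <> RtoC (2 * PI * IZR k)) ->
       Cadd (LGam (deltaR nu) Gamma_tw z w)
            (Cmul (Lpps mu mus (sigmaR kappa) eta z) (Lpps mu mus (sigmaR kappa) eta w))
       = RtoC 0) ->
    (forall z w, inH z -> inH w -> (forall k : Z, Csub z w <> RtoC (2 * PI * IZR k)) ->
       LGam (sigmaR kappa) Gamma_tw z w = RtoC 0) ->
    kappa = 4 /\ nu = 0.
Proof.
  intros kappa nu Hk mu mus eta HC Hfirst Hsecond _.
  destruct (proportional_of_product_eq (fun x y => 0 < y /\ y <> h0) gamma_drift
              (px (curryC eta)) (4 * kappa) (px (curryC eta) 0 h0) 0 (2 * ln 2))
    as (k & Hk0 & Hdx).
  - intro; lra.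
  - split; [apply two_ln_pos | apply two_ln_neq_h0]; lra.
  - destruct drift_jet_A as [-> _]. intro; lra.
  - intros x y [Hy Hne]. apply (second_equation_re kappa nu mu mus); [lra | exact Hy | exact Hne |].
    apply Hsecond; [exact Hy | exact h0_pos |].
    intro n. apply Csub_neq_real_of_Im. exact Hne.
  - assert (Hdx' : forall x y, 0 < y -> y <> h0 -> px (curryC eta) x y = k * gamma_drift x y)
      by (intros x y Hy Hne; apply Hdx; split; assumption).
    pose proof (compatibility_A kappa nu k mu mus eta Hk HC Hfirst Hdx') as HA.
    pose proof (compatibility_B kappa nu k mu mus eta Hk HC Hfirst Hdx') as HB.
    pose proof (compatibility_C kappa nu k mu mus eta Hk HC Hfirst Hdx') as HC'.
    assert (Hnu : nu * k = 0) by lra.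
    assert (Hkappa : (kappa - 4) * k = 0) by lra.
    split.
    + apply Rmult_integral in Hkappa as [H | H]; [lra | contradiction].
    + apply Rmult_integral in Hnu as [H | H]; [exact H | contradiction].
Qed.
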